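(* Let $n$ be even and let $F\colon \mathbb F_2^n\to\mathbb F_2^n$ be a quadratic APN function. For $b\in\mathbb F_2^n\setminus\{0\}$ let $V_b=T_b\cup\overline{T_b}$ as defined in the context. Then the collection $\{V_b\colon b\in\mathbb F_2^n\setminus\{0\}\}$ is a vector space partition of $\mathbb F_2^n$, i.e. each $V_b$ is a subspace, $V_{b_1}\cap V_{b_2}=\{0\}$ for $b_1\neq b_2$, and every nonzero vector of $\mathbb F_2^n$ lies in some $V_b$.
   Context: $\langle\cdot,\cdot\rangle$ is the standard dot product on $\mathbb F_2^n$. A function $F\colon\mathbb F_2^n\to\mathbb F_2^n$ is APN if for every $a\neq 0$ and every $c$, the equation $F(x)+F(x+a)=c$ has at most $2$ solutions $x$. $F$ is quadratic if every component function $x\mapsto\langle b,F(x)\rangle$ is the sum of a quadratic form and an affine function over $\mathbb F_2$. Put $D_{F,a}(x)=F(x)+F(x+a)$, $H_b=\{x\colon\langle b,x\rangle=0\}$, $\overline{H_b}=\{x\colon\langle b,x\rangle=1\}$, $T_b=\{a\in\mathbb F_2^n\colon \mathrm{Im}(D_{F,a})=H_b\}\cup\{0\}$, $\overline{T_b}=\{a\in\mathbb F_2^n\colon \mathrm{Im}(D_{F,a})=\overline{H_b}\}$, and $V_b=T_b\cup\overline{T_b}$. (For a quadratic APN function and $a\ne 0$, $\mathrm{Im}(D_{F,a})$ is an affine hyperplane; $V_b$ is a linear subspace.) *)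

From mathcomp Require Import all_boot all_order all_algebra.
Set Implicit Arguments. Unset Strict Implicit. Unset Printing Implicit Defensive.
Import GRing.Theory.
Local Open Scope ring_scope.

Notation vecF2 n := 'rV['F_2]_n.

Definition dotF2 n (b x : vecF2 n) : 'F_2 := \sum_(i < n) b 0 i * x 0 i.

Definition APN n (F : vecF2 n -> vecF2 n) : Prop :=
  forall a c : vecF2 n, a != 0 -> (#|[set x | (F x + F (x + a) == c)%R]| <= 2)%N.

Definition is_quadratic_form n (q : vecF2 n -> 'F_2) : Prop :=
  exists Q : 'M['F_2]_n,
    forall x, q x = \sum_(i < n) \sum_(j < n | (i <= j)%N) Q i j * x 0 i * x 0 j.

Definition is_affine_fun n (l : vecF2 n -> 'F_2) : Prop :=
  exists (u : vecF2 n) (c : 'F_2), forall x, l x = dotF2 u x + c.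

Definition quadratic n (F : vecF2 n -> vecF2 n) : Prop :=
  forall b : vecF2 n, exists q l,
    is_quadratic_form q /\ is_affine_fun l /\
    forall x, dotF2 b (F x) = q x + l x.

Definition DF n (F : vecF2 n -> vecF2 n) (a : vecF2 n) (x : vecF2 n) :=
  F x + F (x + a).

Definition ImD n (F : vecF2 n -> vecF2 n) (a : vecF2 n) : {set vecF2 n} :=
  [set DF F a x | x in [set: vecF2 n]].

Definition Hb n (b : vecF2 n) : {set vecF2 n} := [set x | dotF2 b x == 0].
Definition Hbbar n (b : vecF2 n) : {set vecF2 n} := [set x | dotF2 b x == 1].

Definition Tb n (F : vecF2 n -> vecF2 n) (b : vecF2 n) : {set vecF2 n} :=
  [set a | ImD F a == Hb b] :|: [set 0].
Definition Tbbar n (F : vecF2 n -> vecF2 n) (b : vecF2 n) : {set vecF2 n} :=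
  [set a | ImD F a == Hbbar b].
Definition Vb n (F : vecF2 n -> vecF2 n) (b : vecF2 n) : {set vecF2 n} :=
  Tb F b :|: Tbbar F b.

Definition is_subspace n (S : {set vecF2 n}) : Prop :=
  0 \in S /\ (forall x y, x \in S -> y \in S -> x + y \in S) /\
  (forall (k : 'F_2) x, x \in S -> k *: x \in S).

From mathcomp Require Import all_boot all_order all_algebra.
From mathcomp Require Import ring zify.
Set Implicit Arguments.
Unset Strict Implicit.
Import GRing.Theory.
Local Open Scope ring_scope.

(** For quadratic F the second difference B(x, a) = F x + F (x + a) + F 0 + F a
    is bilinear, so D_a F x = B(x, a) + D_a F 0 and Im(D_a F) is a translate of
    the image of the linear map L_a := B(., a).  APN forces ker L_a = {0, a},
    hence Im L_a is a hyperplane and Im(D_a F) is H_b or its complement exactly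
    for the b orthogonal to Im L_a.  Thus a is in V_b iff b lies in the line
    (Im L_a)^perp: V_b is a subspace because L_a is linear in a, and every
    a <> 0 lies in exactly one V_b since (Im L_a)^perp has a single nonzero
    vector over F_2. *)

Lemma pchar2_F2 : 2%N \in [pchar 'F_2]. Proof. exact: pchar_Fp. Qed.

Lemma F2P (x : 'F_2) : x = 0 \/ x = 1.
Proof. by case: x => [[|[|k]]] //= lt_k; [left | right]; apply: val_inj. Qed.

Lemma addr_mulr2n_F2 (x z : 'F_2) : x + z *+ 2 = x.
Proof. by rewrite mulr2n addrr_pchar2 ?addr0 // pchar2_F2. Qed.

Lemma addrr_F2 (V : lmodType 'F_2) (v : V) : v + v = 0.
Proof. by rewrite -mulr2n -scaler_nat (pcharf0 pchar2_F2) scale0r. Qed.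

Lemma addr_eq0_F2 (V : lmodType 'F_2) (u v : V) : (u + v == 0) = (u == v).
Proof. by rewrite -(addrr_F2 v) (inj_eq (addIr v)). Qed.

Lemma eq_nz_rank1_F2 m n (K : 'M['F_2]_(m, n)) (u v : 'rV['F_2]_n) :
  \rank K = 1%N -> u != 0 -> v != 0 -> (u <= K)%MS -> (v <= K)%MS -> u = v.
Proof.
move=> rK nz_u nz_v sub_u sub_v.
have sub_Ku : (K <= u)%MS by rewrite -(mxrank_leqif_sup sub_u).2 rank_rV nz_u rK.
have /sub_rVP [k vE] := submx_trans sub_v sub_Ku.
by move: nz_v; rewrite vE; case: (F2P k) => ->; rewrite ?scale1r // scale0r eqxx.
Qed.

Section DotProduct.

Variable n : nat.
Implicit Types (b x y : 'rV['F_2]_n).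

Lemma dotF2E b x : dotF2 b x = (x *m b^T) 0 0.
Proof. by rewrite mxE; apply: eq_bigr => i _; rewrite mxE mulrC. Qed.

Lemma dotF2D b x y : dotF2 b (x + y) = dotF2 b x + dotF2 b y.
Proof. by rewrite !dotF2E mulmxDl mxE. Qed.

Lemma dotF20 b : dotF2 b 0 = 0.
Proof. by rewrite dotF2E mul0mx mxE. Qed.

Lemma dotF2_delta j x : dotF2 (delta_mx 0 j) x = x 0 j.
Proof.
rewrite /dotF2 (bigD1 j) //= big1 => [|i /negbTE neq_ij]; last first.
  by rewrite mxE neq_ij andbF mul0r.
by rewrite mxE !eqxx mul1r addr0.
Qed.

Lemma dotF2_inj x y : (forall b, dotF2 b x = dotF2 b y) -> x = y.
Proof. by move=> eq_xy; apply/rowP => j; rewrite -!dotF2_delta. Qed.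

Lemma sub_kermx_tr b x : (x <= kermx b^T)%MS = (dotF2 b x == 0).
Proof.
by rewrite sub_kermx dotF2E; apply/eqP/eqP => [-> | x_b]; rewrite ?mxE //;
  apply/rowP => i; rewrite ord1 x_b mxE.
Qed.

Lemma sub_kermx_trC m b (M : 'M['F_2]_(m, n)) :
  (M <= kermx b^T)%MS = (b <= kermx M^T)%MS.
Proof. by rewrite !sub_kermx -trmx_eq0 trmx_mul trmxK. Qed.

Lemma rank_kermx_tr b : b != 0 -> (\rank (kermx b^T)).+1 = n.
Proof.
move=> nz_b; rewrite mxrank_ker mxrank_tr rank_rV nz_b.
by have := rank_leq_col b; rewrite rank_rV nz_b; lia.
Qed.

End DotProduct.

Definition second_diff {U V : zmodType} (g : U -> V) (x a : U) : V :=
  g x + g (x + a) + g 0 + g a.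

Section SecondDifference.

Variables (U V : lmodType 'F_2) (g : U -> V).

Lemma second_diffC x a : second_diff g x a = second_diff g a x.
Proof. by rewrite /second_diff [a + x]addrC [LHS](ACl (4 * 2 * 3 * 1)). Qed.

Lemma second_diff0x a : second_diff g 0 a = 0.
Proof. by rewrite /second_diff add0r -addrA addrr_F2. Qed.

Lemma second_diffx0 x : second_diff g x 0 = 0.
Proof. by rewrite second_diffC second_diff0x. Qed.

Lemma second_diffxx a : second_diff g a a = 0.
Proof.
by rewrite /second_diff addrr_F2 -[g a + _ + _]addrA addrr_F2 addr0 addrr_F2.
Qed.

Lemma diff_second_diff x a :
  g x + g (x + a) = second_diff g x a + (g 0 + g (0 + a)).
Proof.
by rewrite add0r /second_diff -[_ + g 0 + g a]addrA -addrA addrr_F2 addr0.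
Qed.

End SecondDifference.

Section QuadraticComponents.

Variable n : nat.
Implicit Types (x y a : 'rV['F_2]_n) (Q : 'M['F_2]_n).

Definition polar_form Q x a : 'F_2 :=
  \sum_(i < n) \sum_(j < n | (i <= j)%N) Q i j * (x 0 i * a 0 j + a 0 i * x 0 j).

Lemma polar_formDl Q x y a :
  polar_form Q (x + y) a = polar_form Q x a + polar_form Q y a.
Proof.
rewrite /polar_form -big_split; apply: eq_bigr => i _; rewrite -big_split.
by apply: eq_bigr => j _ /=; rewrite !mxE; ring.
Qed.

Lemma second_diff_qform (q : 'rV['F_2]_n -> 'F_2) : is_quadratic_form q ->
  exists Q, forall x a, second_diff q x a = polar_form Q x a.
Proof.
case=> Q qE; exists Q => x a; rewrite /second_diff !qE /polar_form -!big_split.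
apply: eq_bigr => i _; rewrite -!big_split; apply: eq_bigr => j _ /=.
(* [ring] does not know that 2 = 0, so the even part is supplied explicitly. *)
rewrite !mxE -[RHS](addr_mulr2n_F2 _ (Q i j * (x 0 i * x 0 j + a 0 i * a 0 j))).
ring.
Qed.

Lemma second_diffDl_qform (q : 'rV['F_2]_n -> 'F_2) x y a :
  is_quadratic_form q ->
  second_diff q (x + y) a = second_diff q x a + second_diff q y a.
Proof. by case/second_diff_qform=> Q qE; rewrite !qE polar_formDl. Qed.

Lemma second_diff_affine (l : 'rV['F_2]_n -> 'F_2) x a : is_affine_fun l ->
  second_diff l x a = 0.
Proof.
case=> u [c lE]; rewrite /second_diff !lE !dotF2D dotF20.
by rewrite -[RHS](addr_mulr2n_F2 _ (dotF2 u x + dotF2 u a + c *+ 2)); ring.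
Qed.

End QuadraticComponents.

Section QuadraticAPN.

Variable n : nat.
Variable F : 'rV['F_2]_n -> 'rV['F_2]_n.
Implicit Types (x y a b : 'rV['F_2]_n).

Lemma Vb0 b : 0 \in Vb F b.
Proof. by rewrite !inE eqxx orbT. Qed.

Lemma mem_Vb_hyperplane a b : a != 0 ->
  (a \in Vb F b) <-> exists e, ImD F a = [set y | dotF2 b y == e].
Proof.
move=> nz_a; rewrite !inE (negbTE nz_a) orbF; split.
  by case/orP=> /eqP ->; [exists 0 | exists 1].
by case=> e ->; case: (F2P e) => ->; rewrite eqxx ?orbT.
Qed.

Hypothesis F_quadratic : quadratic F.

Lemma second_diffDl x y a :
  second_diff F (x + y) a = second_diff F x a + second_diff F y a.
Proof.
apply: dotF2_inj => b; have [q [l [q_form [l_affine FbE]]]] := F_quadratic b.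
have dot_second_diff z : dotF2 b (second_diff F z a) = second_diff q z a.
  rewrite -[RHS]addr0 -(second_diff_affine z a l_affine).
  by rewrite /second_diff !dotF2D !FbE; ring.
by rewrite dot_second_diff dotF2D !dot_second_diff second_diffDl_qform.
Qed.

Definition Dlin_mx a : 'M['F_2]_n := lin1_mx (second_diff F ^~ a).

Lemma mul_Dlin_mx x a : x *m Dlin_mx a = second_diff F x a.
Proof.
rewrite mulmx_sum_row {2}(row_sum_delta x).
elim/big_rec2: _ => [|i y z _ ->]; first by rewrite second_diff0x.
rewrite second_diffDl; congr (_ + _); case: (F2P (x 0 i)) => ->.
  by rewrite !scale0r second_diff0x.
by rewrite !scale1r; apply/rowP => j; rewrite !mxE.
Qed.

Lemma Dlin_mxD a1 a2 : Dlin_mx (a1 + a2) = Dlin_mx a1 + Dlin_mx a2.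
Proof.
apply/row_matrixP => i; rewrite !rowE mulmxDr !mul_Dlin_mx.
by rewrite !(second_diffC F (delta_mx 0 i)) second_diffDl.
Qed.

Lemma Dlin_mx0 : Dlin_mx 0 = 0.
Proof.
by apply/row_matrixP => i; rewrite row0 rowE mul_Dlin_mx second_diffx0.
Qed.

Lemma DF_Dlin_mx a x : DF F a x = x *m Dlin_mx a + DF F a 0.
Proof. by rewrite mul_Dlin_mx /DF diff_second_diff. Qed.

Lemma mem_ImD a y : (y \in ImD F a) = ((y + DF F a 0)%R <= Dlin_mx a)%MS.
Proof.
apply/imsetP/submxP => [[x _ ->] | [x yE]].
  by exists x; rewrite DF_Dlin_mx -addrA addrr_F2 addr0.
by exists x => //; rewrite DF_Dlin_mx -yE -addrA addrr_F2 addr0.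
Qed.

Hypothesis F_APN : APN F.

Lemma second_diff_eq0 a x : a != 0 -> second_diff F x a = 0 -> x = 0 \/ x = a.
Proof.
move=> nz_a xa0; have [->|nz_x] := eqVneq x 0; first by left.
have [->|neq_xa] := eqVneq x a; first by right.
have : (#|x |: [set 0%R; a]| <= 2)%N.
  apply: leq_trans (@F_APN a (F 0 + F a) nz_a).
  apply/subset_leq_card/subsetP => z.
  rewrite !inE => /orP [/eqP -> | /orP [] /eqP ->];
    rewrite ?add0r ?addrr_F2 ?(addrC (F a)) //.
  by rewrite -addr_eq0_F2 addrA; apply/eqP.
by rewrite !cardsU1 cards1 !inE negb_or nz_x neq_xa eq_sym nz_a.
Qed.

Lemma rank_Dlin_mx a : a != 0 -> (\rank (Dlin_mx a)).+1 = n.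
Proof.
move=> nz_a; have ker_a : (kermx (Dlin_mx a) :=: a)%MS.
  apply/eqmxP/andP; split; last by rewrite sub_kermx mul_Dlin_mx second_diffxx.
  apply/row_subP => i; have := mulmx_ker (Dlin_mx a).
  move/(congr1 (row i)); rewrite row_mul mul_Dlin_mx row0.
  by case/second_diff_eq0=> // ->; rewrite ?sub0mx.
have := mxrank_ker (Dlin_mx a); rewrite ker_a rank_rV nz_a.
by have := rank_leq_row (Dlin_mx a); lia.
Qed.

Lemma rank_kermx_Dlin_mx_tr a : a != 0 -> \rank (kermx (Dlin_mx a)^T) = 1%N.
Proof.
by move=> nz_a; rewrite mxrank_ker mxrank_tr; have := rank_Dlin_mx nz_a; lia.
Qed.

Lemma Vb_kermx a b : b != 0 -> (a \in Vb F b) = (Dlin_mx a <= kermx b^T)%MS.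
Proof.
move=> nz_b; have [->|nz_a] := eqVneq a 0; first by rewrite Vb0 Dlin_mx0 sub0mx.
apply/idP/idP => [|sub_ker].
  case/(mem_Vb_hyperplane b nz_a) => e ImDE.
  have dot_DF x : dotF2 b (DF F a x) = e.
    have : DF F a x \in ImD F a by apply: imset_f.
    by rewrite ImDE inE => /eqP.
  apply/row_subP => i; rewrite sub_kermx_tr rowE.
  have := dot_DF (delta_mx 0 i); rewrite DF_Dlin_mx dotF2D dot_DF.
  by rewrite -[X in _ = X]add0r => /addIr ->.
apply/(mem_Vb_hyperplane b nz_a); exists (dotF2 b (DF F a 0)).
have eq_ker : (Dlin_mx a == kermx b^T)%MS.
  rewrite -(mxrank_leqif_eq sub_ker).2; apply/eqP/succn_inj.
  by rewrite rank_Dlin_mx ?rank_kermx_tr.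
apply/setP => y; rewrite mem_ImD inE (eqmxP eq_ker) sub_kermx_tr dotF2D.
by rewrite addr_eq0 (oppr_pchar2 pchar2_F2).
Qed.

Lemma Vb_subspace b : b != 0 -> is_subspace (Vb F b).
Proof.
move=> nz_b; split; first exact: Vb0.
split=> [x y | k x Vx]; first by rewrite !Vb_kermx // Dlin_mxD; exact: addmx_sub.
by case: (F2P k) => ->; rewrite ?scale1r // scale0r Vb0.
Qed.

Lemma Vb_disjoint b1 b2 : b1 != 0 -> b2 != 0 -> b1 != b2 ->
  Vb F b1 :&: Vb F b2 = [set 0].
Proof.
move=> nz_b1 nz_b2 neq_b; apply/setP => a; rewrite in_setI in_set1.
have [->|nz_a] := eqVneq a 0; first by apply/andP; split; apply: Vb0.
apply/negbTE/negP; rewrite !Vb_kermx // !(sub_kermx_trC _ (Dlin_mx a)).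
case/andP=> sub1 sub2; move: neq_b.
by rewrite (eq_nz_rank1_F2 (rank_kermx_Dlin_mx_tr nz_a) nz_b1 nz_b2) ?eqxx.
Qed.

Lemma Vb_cover a : a != 0 -> exists2 b, b != 0 & a \in Vb F b.
Proof.
move=> nz_a; have nz_b : nz_row (kermx (Dlin_mx a)^T) != 0.
  by rewrite nz_row_eq0 -mxrank_eq0 rank_kermx_Dlin_mx_tr.
exists (nz_row (kermx (Dlin_mx a)^T)) => //.
by rewrite Vb_kermx // sub_kermx_trC nz_row_sub.
Qed.

End QuadraticAPN.

Theorem mainTheorem1 (n : nat) (F : 'rV['F_2]_n -> 'rV['F_2]_n) :
  ~~ odd n -> quadratic F -> APN F ->
  [/\ (forall b : 'rV['F_2]_n, b != 0 -> is_subspace (Vb F b)),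
      (forall b1 b2 : 'rV['F_2]_n, b1 != 0 -> b2 != 0 -> b1 != b2 ->
          Vb F b1 :&: Vb F b2 = [set 0]) &
      (forall x : 'rV['F_2]_n, x != 0 -> exists2 b, b != 0 & x \in Vb F b)].
Proof.
move=> _ F_quadratic F_APN.
split; [exact: Vb_subspace | exact: Vb_disjoint | exact: Vb_cover].
Qed.
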